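(* Let $T,S:X\rightrightarrows X^*$ be pseudomonotone operators with $T\subset S$. If $T$ is pre-maximal pseudomonotone, then $S$ is pre-maximal pseudomonotone and $T^\rho=S^\rho$.
   Context: $X$ is a real Banach space with dual $X^*$ and pairing $\langle x,x^*\rangle=x^*(x)$. A multivalued operator $T:X\rightrightarrows X^*$ is identified with its graph $T\subset X\times X^*$. For $(x,x^* ),(y,y^* )\in X\times X^*$, write $(x,x^* )\sim_p(y,y^* )$ if either $\min\{\langle x-y,y^*\rangle,\langle y-x,x^*\rangle\}<0$ or $\langle x-y,y^*\rangle=\langle y-x,x^*\rangle=0$. The pseudomonotone polar of $T$ is $T^\rho=\{(x,x^* )\in X\times X^*: (x,x^* )\sim_p(y,y^* )\ \forall (y,y^* )\in T\}$. $T$ is pseudomonotone if for all $(x,x^* ),(y,y^* )\in T$, $\langle y-x,x^*\rangle\ge0$ implies $\langle y-x,y^*\rangle\ge0$. $T$ is pre-maximal pseudomonotone if both $T$ and $T^\rho$ are pseudomonotone. *)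

From Stdlib Require Import Reals.
Open Scope R_scope.

Record BanachSpace := {
  bs_carrier :> Type;
  bs_zero : bs_carrier;
  bs_add : bs_carrier -> bs_carrier -> bs_carrier;
  bs_opp : bs_carrier -> bs_carrier;
  bs_scal : R -> bs_carrier -> bs_carrier;
  bs_norm : bs_carrier -> R;
  bs_addA : forall x y z, bs_add x (bs_add y z) = bs_add (bs_add x y) z;
  bs_addC : forall x y, bs_add x y = bs_add y x;
  bs_add0 : forall x, bs_add x bs_zero = x;
  bs_addN : forall x, bs_add x (bs_opp x) = bs_zero;
  bs_scalA : forall a b x, bs_scal a (bs_scal b x) = bs_scal (a * b) x;
  bs_scal1 : forall x, bs_scal 1 x = x;
  bs_scalDr : forall a x y, bs_scal a (bs_add x y) = bs_add (bs_scal a x) (bs_scal a y);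
  bs_scalDl : forall a b x, bs_scal (a + b) x = bs_add (bs_scal a x) (bs_scal b x);
  bs_norm_ge0 : forall x, 0 <= bs_norm x;
  bs_norm_eq0 : forall x, bs_norm x = 0 -> x = bs_zero;
  bs_normZ : forall a x, bs_norm (bs_scal a x) = Rabs a * bs_norm x;
  bs_normD : forall x y, bs_norm (bs_add x y) <= bs_norm x + bs_norm y;
  bs_complete : forall u : nat -> bs_carrier,
    (forall eps, 0 < eps -> exists N, forall n m, (n >= N)%nat -> (m >= N)%nat ->
        bs_norm (bs_add (u n) (bs_opp (u m))) < eps) ->
    exists l, forall eps, 0 < eps -> exists N, forall n, (n >= N)%nat ->
        bs_norm (bs_add (u n) (bs_opp l)) < eps
}.

Definition bs_sub (X : BanachSpace) (x y : X) : X := bs_add X x (bs_opp X y).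

Definition is_cont_linear (X : BanachSpace) (f : X -> R) : Prop :=
  (forall x y, f (bs_add X x y) = f x + f y) /\
  (forall a x, f (bs_scal X a x) = a * f x) /\
  (exists M, forall x, Rabs (f x) <= M * bs_norm X x).

Definition dual (X : BanachSpace) : Type := { f : X -> R | is_cont_linear X f }.

Definition pairing (X : BanachSpace) (x : X) (xs : dual X) : R := proj1_sig xs x.

Definition operator (X : BanachSpace) : Type := X -> dual X -> Prop.

Definition op_subset (X : BanachSpace) (T S : operator X) : Prop :=
  forall x xs, T x xs -> S x xs.

Definition op_eq (X : BanachSpace) (T S : operator X) : Prop :=
  forall x xs, T x xs <-> S x xs.

Definition psim (X : BanachSpace) (x : X) (xs : dual X) (y : X) (ys : dual X) : Prop :=
  Rmin (pairing X (bs_sub X x y) ys) (pairing X (bs_sub X y x) xs) < 0 \/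
  (pairing X (bs_sub X x y) ys = 0 /\ pairing X (bs_sub X y x) xs = 0).

Definition pm_polar (X : BanachSpace) (T : operator X) : operator X :=
  fun x xs => forall y ys, T y ys -> psim X x xs y ys.

Definition pseudomonotone (X : BanachSpace) (T : operator X) : Prop :=
  forall x xs y ys, T x xs -> T y ys ->
    pairing X (bs_sub X y x) xs >= 0 -> pairing X (bs_sub X y x) ys >= 0.

Definition pre_maximal_pm (X : BanachSpace) (T : operator X) : Prop :=
  pseudomonotone X T /\ pseudomonotone X (pm_polar X T).

(* Proof idea: the polar is antitone, so S^rho is contained in T^rho.
   Conversely, every element of S is ~p-related to T (as S is pseudomonotone
   and contains T), so S lies in T^rho; since T^rho is pseudomonotone, any two
   of its elements are ~p-related, whence T^rho lies in S^rho.  Hence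
   T^rho = S^rho, which is pseudomonotone. *)
From Stdlib Require Import Reals Lra.
Open Scope R_scope.

Lemma bs_sub_addC (X : BanachSpace) (x y : X) :
  bs_add X (bs_sub X x y) (bs_sub X y x) = bs_zero X.
Proof.
  unfold bs_sub.
  rewrite <- bs_addA, (bs_addA X (bs_opp X y)), (bs_addC X (bs_opp X y) y).
  rewrite bs_addN, (bs_addC X (bs_zero X)), bs_add0.
  apply bs_addN.
Qed.

Lemma pairing_subC (X : BanachSpace) (x y : X) (f : dual X) :
  pairing X (bs_sub X y x) f = - pairing X (bs_sub X x y) f.
Proof.
  unfold pairing; destruct (proj2_sig f) as [f_add _].
  assert (f0 : proj1_sig f (bs_zero X) = 0).
  { pose proof (f_add (bs_zero X) (bs_zero X)) as H.
    rewrite bs_add0 in H; lra. }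
  pose proof (f_add (bs_sub X x y) (bs_sub X y x)) as H.
  rewrite bs_sub_addC, f0 in H; lra.
Qed.

Lemma pseudomonotone_psim (X : BanachSpace) (P : operator X) x xs y ys :
  pseudomonotone X P -> P x xs -> P y ys -> psim X x xs y ys.
Proof.
  intros HP Hx Hy; unfold psim.
  pose proof (pairing_subC X x y xs); pose proof (pairing_subC X x y ys).
  destruct (Rlt_dec (Rmin (pairing X (bs_sub X x y) ys)
                          (pairing X (bs_sub X y x) xs)) 0) as [Hneg | Hnneg].
  - left; exact Hneg.
  - right; apply Rnot_lt_le in Hnneg.
    pose proof (Rle_trans _ _ _ Hnneg (Rmin_l _ _)).
    pose proof (Rle_trans _ _ _ Hnneg (Rmin_r _ _)).
    pose proof (HP x xs y ys Hx Hy ltac:(lra)).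
    pose proof (HP y ys x xs Hy Hx ltac:(lra)).
    lra.
Qed.

Lemma pm_polar_antitone (X : BanachSpace) (T S : operator X) :
  op_subset X T S -> op_subset X (pm_polar X S) (pm_polar X T).
Proof. intros TS x xs Hx y ys Hy; exact (Hx y ys (TS y ys Hy)). Qed.

Lemma pseudomonotone_sub_pm_polar (X : BanachSpace) (T S : operator X) :
  pseudomonotone X S -> op_subset X T S -> op_subset X S (pm_polar X T).
Proof.
  intros HS TS x xs Hx y ys Hy.
  exact (pseudomonotone_psim X S x xs y ys HS Hx (TS y ys Hy)).
Qed.

Lemma pm_polar_sub_pm_polar (X : BanachSpace) (T S : operator X) :
  pseudomonotone X (pm_polar X T) -> op_subset X S (pm_polar X T) ->
  op_subset X (pm_polar X T) (pm_polar X S).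
Proof.
  intros HTr ST x xs Hx y ys Hy.
  exact (pseudomonotone_psim X _ x xs y ys HTr Hx (ST y ys Hy)).
Qed.

Lemma pseudomonotone_op_eq (X : BanachSpace) (T S : operator X) :
  op_eq X T S -> pseudomonotone X T -> pseudomonotone X S.
Proof.
  intros TS HT x xs y ys Hx Hy.
  exact (HT x xs y ys (proj2 (TS x xs) Hx) (proj2 (TS y ys) Hy)).
Qed.

Theorem mainTheorem11 (X : BanachSpace) (T S : operator X) :
  pseudomonotone X T -> pseudomonotone X S -> op_subset X T S ->
  pre_maximal_pm X T ->
  pre_maximal_pm X S /\ op_eq X (pm_polar X T) (pm_polar X S).
Proof.
  intros _ HS TS [_ HTr].
  assert (polar_eq : op_eq X (pm_polar X T) (pm_polar X S)).
  { intros x xs; split.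
    - apply pm_polar_sub_pm_polar; [exact HTr |].
      exact (pseudomonotone_sub_pm_polar X T S HS TS).
    - apply (pm_polar_antitone X T S TS). }
  split; [split |]; [exact HS | | exact polar_eq].
  exact (pseudomonotone_op_eq X _ _ polar_eq HTr).
Qed.
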